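(* Let $A\in\mathbb{R}^{n\times n}$. Then for $k>1$, $$A_\star^k=A_\star^{k-1}-\mathcal{U}\big(A\,\mathcal{U}(A^TA_\star^{k-1})\big),\qquad A_\star^1=I_n-\mathcal{U}\big(A\,\mathcal{U}(A^T)\big),$$ and for all $1\le j\le n$ and $k>1$, $$(A_\star^k)_{1:j,j}=(I_j-A|_{j\times j}A|_{j\times j}^T)(A_\star^{k-1})_{1:j,j}.$$ Moreover, let $M\in\mathbb{R}^{n\times n}$ and $\alpha>0$ be such that $\max_{1\le j\le n}\|I_j-\alpha M|_{j\times j}M|_{j\times j}^T\|_{S_\infty}<1$, and set $A:=\sqrt{\alpha}M$. Then $M$ has an $LU$-factorization $M=LU$ with $L$ unit lower triangular and $U$ upper triangular, and $$U^{-1}=\alpha\,\mathcal{U}\Big(M^T\Big(I_n+\sum_{m=1}^\infty A_\star^m\Big)\Big).$$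
   Context: $I_j$ is the $j\times j$ identity; $M|_{j\times j}$ denotes the upper left $j\times j$ submatrix of $M$; $M_{i:j,k:l}$ denotes the submatrix with rows $i..j$ and columns $k..l$. $\mathcal{U}(M)_{ij}:=M_{ij}$ for $i\le j$, $0$ for $i>j$. For $A\in\mathbb{R}^{n\times n}$ and $k\in\mathbb{N}$, $A_\star^k\in\mathbb{R}^{n\times n}$ is defined by $(A_\star^k)_{ij}:=\big((I_j-A|_{j\times j}A|_{j\times j}^T)^k\big)_{ij}$ for $i\le j$ and $(A_\star^k)_{ij}:=0$ for $i>j$. $\|\cdot\|_{S_\infty}$ is the spectral norm. *)

From HB Require Import structures.
From mathcomp Require Import all_boot all_order all_algebra.
From mathcomp Require Import all_classical all_reals all_analysis.
Set Implicit Arguments. Unset Strict Implicit. Unset Printing Implicit Defensive.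
Import Order.TTheory GRing.Theory Num.Theory.
Local Open Scope ring_scope.
Local Open Scope classical_set_scope.

Section Defs.
Variable R : realType.

Definition upper n (M : 'M[R]_n) : 'M[R]_n :=
  \matrix_(i, j) (if (i <= j)%N then M i j else 0).

(* Leading principal (j+1)x(j+1) submatrix, for a 0-based index j : 'I_n
   (= the paper's M|_{j x j} with 1-based j). *)
Definition lsub n (M : 'M[R]_n) (j : 'I_n) : 'M[R]_(j.+1) :=
  \matrix_(a, b) M (widen_ord (ltn_ord j) a) (widen_ord (ltn_ord j) b).

(* Column j, rows 0..j (= paper's M_{1:j,j}). *)
Definition colpart n (M : 'M[R]_n) (j : 'I_n) : 'cV[R]_(j.+1) :=
  \col_a M (widen_ord (ltn_ord j) a) j.

Definition Astar n (A : 'M[R]_n) (k : nat) : 'M[R]_n :=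
  \matrix_(i, j) (if (i <= j)%N then
     ((1%:M - lsub A j *m (lsub A j)^T) ^+ k) (inord i) ord_max
   else 0).

Definition vnorm2 p (x : 'cV[R]_p) : R := Num.sqrt (\sum_i (x i 0) ^+ 2).

Definition specnorm p (B : 'M[R]_p) : R :=
  sup [set vnorm2 (B *m x) | x in [set x : 'cV[R]_p | vnorm2 x <= 1]].

End Defs.

From HB Require Import structures.
From mathcomp Require Import all_boot all_order all_algebra.
From mathcomp Require Import all_classical all_reals all_analysis.
Import Order.TTheory GRing.Theory Num.Theory.
Local Open Scope ring_scope.
Import numFieldNormedType.Exports.
Local Open Scope classical_set_scope.

(* All matrices involved are upper triangular, and such a matrix is handled
   through its column parts  colpart X j = X_{1:j,j}:  [ucols C] is the upper
   triangular matrix with column parts C j, and when Y is upper triangular the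
   column parts of a product are (X Y)_{1:j,j} = X|_j Y_{1:j,j} ([colpart_mul]).
   1. By definition (A_star^k)_{1:j,j} is the last column of B_j^k, where
      B_j = I - A|_j A|_j^T ([lres]); so (A_star^(k+1))_{1:j,j} = B_j (A_star^k)_{1:j,j},
      and by [colpart_mul] this column identity is the matrix recursion.
   2. If every leading block M|_j is invertible, the upper triangular V whose
      j-th column part is the last column of M|_j^-1 satisfies (M V)_{1:j,j} = e_j;
      hence L = M V is unit lower triangular and M = L U with U = V^-1, which is
      upper triangular because V is.
   3. Under the hypothesis, B_j = I - alpha M|_j M|_j^T is a contraction for the
      spectral norm, so the Neumann series sum_m B_j^m converges to G_j^-1 B_j with
      G_j = alpha M|_j M|_j^T, and M|_j^-1 = alpha M|_j^T G_j^-1; read column by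
      column this is U^-1 = alpha U(M^T (I + S)) with S = sum_m A_star^m. *)

Set Implicit Arguments. Unset Strict Implicit. Unset Printing Implicit Defensive.

Definition upper_triangular (T : nmodType) n (X : 'M[T]_n) : Prop :=
  forall i j : 'I_n, (j < i)%N -> X i j = 0.

Section TriangularInverse.
Variable F : fieldType.

Lemma upper_triangular_det n (V : 'M[F]_n) :
  upper_triangular V -> \det V = \prod_i V i i.
Proof.
move=> Vup; rewrite -det_tr det_trig; last first.
  by apply/is_trig_mxP => i j ij; rewrite mxE Vup.
by apply: eq_bigr => i _; rewrite mxE.
Qed.

(* The inverse of an invertible upper triangular matrix is upper triangular:
   below the diagonal, row i of V V^-1 = 1 determines (V^-1)_{ij} from the
   entries (V^-1)_{lj} with l > i, which vanish by descending induction on i. *)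
Lemma upper_triangular_inv n (V : 'M[F]_n) :
  upper_triangular V -> V \in unitmx -> upper_triangular (invmx V).
Proof.
move=> Vup Vunit i j; move: {2}(n - i)%N (leqnn (n - i)) => d.
have Vdiag k : V k k != 0.
  by move: Vunit; rewrite unitmxE unitfE upper_triangular_det // => /prodf_neq0; apply.
elim: d i => [|d IH] i i_top ji.
  by move: i_top; rewrite leqn0 subn_eq0 leqNgt ltn_ord.
have := congr1 (fun X : 'M[F]_n => X i j) (mulmxV Vunit).
rewrite !mxE -val_eqE (gtn_eqF ji) (bigD1 i) //= big1 ?addr0.
  by move/eqP; rewrite mulf_eq0 (negPf (Vdiag i)) => /eqP.
move=> l /negPf l_neq_i; case: (ltngtP l i) => [li|il|/val_inj l_eq_i].
- by rewrite Vup // mul0r.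
- by rewrite IH ?mulr0 ?(ltn_trans ji) // -ltnS (leq_trans _ i_top) // ltn_sub2l.
- by rewrite l_eq_i eqxx in l_neq_i.
Qed.

End TriangularInverse.

Section ColumnParts.
Variable R : realType.

Definition ucols n (C : forall j : 'I_n, 'cV[R]_j.+1) : 'M[R]_n :=
  \matrix_(i, j) (if (i <= j)%N then C j (inord i) 0 else 0).

Lemma ucols_upper n (C : forall j : 'I_n, 'cV[R]_j.+1) : upper_triangular (ucols C).
Proof. by move=> i j ji; rewrite mxE leqNgt ji. Qed.

Lemma colpart_ucols n (C : forall j : 'I_n, 'cV[R]_j.+1) j : colpart (ucols C) j = C j.
Proof.
apply/matrixP => a b; rewrite (ord1 b) !mxE /= -ltnS ltn_ord.
by congr (C j _ 0); apply: val_inj; rewrite /= inordK.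
Qed.

Lemma colpartE n (X : 'M[R]_n) (i j : 'I_n) :
  (i <= j)%N -> colpart X j (inord i) 0 = X i j.
Proof. by move=> ij; rewrite mxE; congr (X _ j); apply: val_inj; rewrite /= inordK. Qed.

Lemma upper_colpart n (X : 'M[R]_n) : upper X = ucols (colpart X).
Proof.
by apply/matrixP => i j; rewrite [LHS]mxE [RHS]mxE; case: leqP => // ij; rewrite colpartE.
Qed.

Lemma ucols_colpart n (X : 'M[R]_n) : upper_triangular X -> ucols (colpart X) = X.
Proof.
move=> Xup; apply/matrixP => i j; rewrite [LHS]mxE.
by case: leqP => [ij|ji]; [rewrite colpartE | rewrite Xup].
Qed.

Lemma eq_ucols n (C D : forall j : 'I_n, 'cV[R]_j.+1) :
  (forall j, C j = D j) -> ucols C = ucols D.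
Proof. by move=> CD; apply/matrixP => i j; rewrite !mxE CD. Qed.

Lemma ucolsD n (C D : forall j : 'I_n, 'cV[R]_j.+1) :
  ucols C + ucols D = ucols (fun j => C j + D j).
Proof. by apply/matrixP => i j; rewrite !mxE; case: leqP; rewrite ?addr0 // mxE. Qed.

Lemma ucolsB n (C D : forall j : 'I_n, 'cV[R]_j.+1) :
  ucols C - ucols D = ucols (fun j => C j - D j).
Proof. by apply/matrixP => i j; rewrite !mxE; case: leqP; rewrite ?subr0 // !mxE. Qed.

Lemma ucolsZ n a (C : forall j : 'I_n, 'cV[R]_j.+1) :
  a *: ucols C = ucols (fun j => a *: C j).
Proof. by apply/matrixP => i j; rewrite !mxE; case: leqP; rewrite ?mulr0 // mxE. Qed.

Lemma ucols1 n : ucols (fun j : 'I_n => col ord_max 1%:M) = 1%:M.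
Proof.
apply/matrixP => i j; rewrite !mxE; case: leqP => [ij|ji].
  by congr (_%:R); rewrite -val_eqE -[i == j]val_eqE /= inordK.
by rewrite -val_eqE (gtn_eqF ji).
Qed.

Lemma lsub_tr n (X : 'M[R]_n) j : lsub X^T j = (lsub X j)^T.
Proof. by apply/matrixP => a b; rewrite !mxE. Qed.

Lemma lsubZ n a (X : 'M[R]_n) j : lsub (a *: X) j = a *: lsub X j.
Proof. by apply/matrixP => a' b; rewrite !mxE. Qed.

Lemma col_mul m n p (X : 'M[R]_(m, n)) (Y : 'M[R]_(n, p)) j :
  col j (X *m Y) = X *m col j Y.
Proof. by rewrite !colE mulmxA. Qed.

(* (X Y)_{1:j,j} = X|_j Y_{1:j,j} when Y is upper triangular, since then only
   the indices l <= j contribute to (X Y)_{ij}. *)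
Lemma colpart_mul n (X Y : 'M[R]_n) j : upper_triangular Y ->
  colpart (X *m Y) j = lsub X j *m colpart Y j.
Proof.
move=> Yup; apply/matrixP => a b; rewrite (ord1 b) !mxE.
rewrite (bigID (fun l : 'I_n => (l < j.+1)%N)) /= [X in _ + X]big1 ?addr0; last first.
  by move=> l; rewrite -leqNgt => /Yup ->; rewrite mulr0.
by rewrite (big_ord_narrow (ltn_ord j)); apply: eq_bigr => l _; rewrite !mxE.
Qed.

End ColumnParts.

Section StarRecursion.
Variable R : realType.
Variable n : nat.
Implicit Types (A : 'M[R]_n) (j : 'I_n).

Definition lres A j : 'M[R]_j.+1 := 1%:M - lsub A j *m (lsub A j)^T.

Lemma AstarE A k : Astar A k = ucols (fun j => col ord_max (lres A j ^+ k)).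
Proof. by apply/matrixP => i j; rewrite !mxE. Qed.

Lemma Astar_upper A k : upper_triangular (Astar A k).
Proof. by rewrite AstarE; apply: ucols_upper. Qed.

Lemma Astar0 A : Astar A 0 = 1%:M.
Proof. by rewrite AstarE -ucols1; apply: eq_ucols => j; rewrite expr0. Qed.

Lemma colpart_AstarS A k j :
  colpart (Astar A k.+1) j = lres A j *m colpart (Astar A k) j.
Proof. by rewrite !AstarE !colpart_ucols exprS -col_mul. Qed.

Lemma upper_upper (X : 'M[R]_n) : upper_triangular (upper X).
Proof. by rewrite upper_colpart; apply: ucols_upper. Qed.

Lemma colpart_sandwich A (Y : 'M[R]_n) j : upper_triangular Y ->
  colpart (A *m upper (A^T *m Y)) j = (lsub A j *m (lsub A j)^T) *m colpart Y j.
Proof.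
move=> Yup; rewrite (colpart_mul _ _ (upper_upper _)) upper_colpart colpart_ucols.
by rewrite (colpart_mul _ _ Yup) lsub_tr mulmxA.
Qed.

Lemma AstarS A k :
  Astar A k.+1 = Astar A k - upper (A *m upper (A^T *m Astar A k)).
Proof.
rewrite upper_colpart -{1}(ucols_colpart (Astar_upper A k)) ucolsB.
rewrite -(ucols_colpart (Astar_upper A k.+1)); apply: eq_ucols => j.
rewrite colpart_AstarS (colpart_sandwich _ _ (Astar_upper A k)).
by rewrite /lres mulmxDl mul1mx mulNmx.
Qed.

End StarRecursion.

Section LUFactorisation.
Variable R : realType.
Variables (n : nat) (M : 'M[R]_n).
Hypothesis leading_blocks_unit : forall j, lsub M j \in unitmx.

Definition inv_upper_factor : 'M[R]_n :=
  ucols (fun j => col ord_max (invmx (lsub M j))).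

(* M V is unit lower triangular, because (M V)_{1:j,j} = M|_j (M|_j^-1)_{:,j} = e_j. *)
Lemma lower_factorE (i j : 'I_n) :
  (i <= j)%N -> (M *m inv_upper_factor) i j = (i == j)%:R.
Proof.
move=> ij; rewrite -colpartE // (colpart_mul _ _ (ucols_upper _)) colpart_ucols.
rewrite -col_mul mulmxV // !mxE; congr (_%:R).
by rewrite -val_eqE -[i == j]val_eqE /= inordK.
Qed.

Lemma inv_upper_factor_unit : inv_upper_factor \in unitmx.
Proof.
have : \det (M *m inv_upper_factor) = 1.
  rewrite det_trig; last first.
    by apply/is_trig_mxP => i j ij; rewrite lower_factorE ?(ltnW ij) // -val_eqE ltn_eqF.
  by rewrite big1 // => i _; rewrite lower_factorE // eqxx.
rewrite det_mulmx unitmxE unitfE; apply: contra_eqN => /eqP ->.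
by rewrite mulr0 eq_sym oner_neq0.
Qed.

End LUFactorisation.

Section SpectralNorm.
Variable R : realType.
Variable p : nat.
Implicit Types (x : 'cV[R]_p) (B : 'M[R]_p).

Lemma vnorm2_ge0 x : 0 <= vnorm2 x.
Proof. exact: sqrtr_ge0. Qed.

Lemma vnorm2Z c x : vnorm2 (c *: x) = `|c| * vnorm2 x.
Proof.
rewrite /vnorm2 -sqrtr_sqr -sqrtrM ?sqr_ge0 // big_distrr /=.
by congr Num.sqrt; apply: eq_bigr => i _; rewrite mxE exprMn.
Qed.

Lemma vnorm2_eq0 x : vnorm2 x = 0 -> x = 0.
Proof.
move/eqP; rewrite sqrtr_eq0 => sum_le0.
have sum0 : \sum_i (x i 0) ^+ 2 = 0.
  by apply/eqP; rewrite eq_le sum_le0 sumr_ge0 // => i _; rewrite sqr_ge0.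
apply/matrixP => i k; rewrite (ord1 k) mxE; apply/eqP; rewrite -sqrf_eq0.
by apply/eqP; apply: (psumr_eq0P _ sum0) => // l _; rewrite sqr_ge0.
Qed.

Lemma vnorm2_0 : vnorm2 (0 : 'cV[R]_p) = 0.
Proof. by rewrite /vnorm2 big1 ?sqrtr0 // => i _; rewrite mxE expr0n. Qed.

Lemma vnorm2_delta (y : 'I_p) : vnorm2 (delta_mx y 0 : 'cV[R]_p) = 1.
Proof.
rewrite /vnorm2 (bigD1 y) //= big1 ?addr0 ?mxE ?eqxx ?expr1n ?sqrtr1 //.
by move=> i /negPf iy; rewrite mxE iy expr0n.
Qed.

Lemma entry_le x i : `|x i 0| <= vnorm2 x.
Proof.
rewrite -sqrtr_sqr /vnorm2 ler_wsqrtr // (bigD1 i) //= lerDl.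
by rewrite sumr_ge0 // => l _; rewrite sqr_ge0.
Qed.

(* The set whose supremum is specnorm B is bounded (by the entries of B), so
   the supremum is a genuine least upper bound. *)
Lemma specnorm_has_ub B :
  has_ubound [set vnorm2 (B *m x) | x in [set x : 'cV[R]_p | vnorm2 x <= 1]].
Proof.
exists (Num.sqrt (\sum_i (\sum_l `|B i l|) ^+ 2)) => _ [x x_le1 <-].
apply: ler_wsqrtr; apply: ler_sum => i _; rewrite -real_normK ?num_real //.
apply: lerXn2r; rewrite ?nnegrE ?sumr_ge0 // mxE.
apply: le_trans (ler_norm_sum _ _ _) _; apply: ler_sum => l _.
rewrite normrM -[leRHS]mulr1 ler_wpM2l //.
exact: le_trans (entry_le x l) x_le1.
Qed.

Lemma specnorm_ge0 B : 0 <= specnorm B.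
Proof.
apply: (ub_le_sup (specnorm_has_ub B)); exists 0; first by rewrite /= vnorm2_0.
by rewrite mulmx0 vnorm2_0.
Qed.

Lemma specnorm_bound B x : vnorm2 (B *m x) <= specnorm B * vnorm2 x.
Proof.
have [/vnorm2_eq0 ->|x_neq0] := eqVneq (vnorm2 x) 0.
  by rewrite mulmx0 vnorm2_0 mulr0.
have x_gt0 : 0 < vnorm2 x by rewrite lt_def x_neq0 vnorm2_ge0.
have unit_x : vnorm2 ((vnorm2 x)^-1 *: x) <= 1.
  by rewrite vnorm2Z ger0_norm ?invr_ge0 ?vnorm2_ge0 // mulVf.
have := ub_le_sup (specnorm_has_ub B) (imageP (fun y => vnorm2 (B *m y)) unit_x).
rewrite -scalemxAr vnorm2Z ger0_norm ?invr_ge0 ?vnorm2_ge0 //.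
by rewrite ler_pdivrMl // mulrC.
Qed.

End SpectralNorm.

Section NeumannSeries.
Variable R : realType.
Variable p : nat.
Implicit Types (B : 'M[R]_p.+1).

Lemma specnorm_pow B (x : 'cV[R]_p.+1) k :
  vnorm2 (B ^+ k *m x) <= specnorm B ^+ k * vnorm2 x.
Proof.
elim: k => [|k IH]; first by rewrite expr0 mul1mx mul1r.
rewrite exprS -mulmxE -mulmxA exprS -mulrA.
apply: le_trans (specnorm_bound _ _) _.
by rewrite ler_wpM2l // specnorm_ge0.
Qed.

(* Entries of B^k are bounded by ||B||^k (test B^k on a basis vector). *)
Lemma pow_entry_le B k (i j : 'I_p.+1) : `|(B ^+ k) i j| <= specnorm B ^+ k.
Proof.
have -> : (B ^+ k) i j = (B ^+ k *m (delta_mx j 0 : 'cV_p.+1)) i 0.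
  by rewrite -colE mxE.
apply: le_trans (entry_le _ _) _.
by rewrite -[leRHS]mulr1 -(vnorm2_delta R j) specnorm_pow.
Qed.

(* A contraction fixes no nonzero vector, so I - B is invertible. *)
Lemma contraction_unit B : specnorm B < 1 -> 1%:M - B \in unitmx.
Proof.
move=> B_lt1; rewrite unitmxE unitfE -det_tr; apply/negP => /det0P[v v_neq0 vG0].
have Bv : B *m v^T = v^T.
  have : (1%:M - B) *m v^T = 0 by rewrite -[1%:M - B]trmxK -trmx_mul vG0 trmx0.
  by rewrite mulmxDl mul1mx mulNmx => /subr0_eq.
have v_gt0 : 0 < vnorm2 v^T.
  rewrite lt_def vnorm2_ge0 andbT; apply: contraNN v_neq0 => /eqP /vnorm2_eq0 v0.
  by rewrite -[v]trmxK v0 trmx0.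
by move: (specnorm_bound B v^T); rewrite Bv ler_pMl // leNgt B_lt1.
Qed.

Lemma geometric_dominated_cvg0 (u : nat -> R) (K c : R) : 0 <= c -> c < 1 ->
  (forall N, `|u N| <= K * c ^+ N) -> u @ \oo --> 0.
Proof.
move=> c_ge0 c_lt1 u_le.
have geom0 : (fun N => K * c ^+ N) @ \oo --> 0.
  by rewrite -(mulr0 K); apply: cvgMr; apply: cvg_expr; rewrite ger0_norm.
apply: (@squeeze_cvgr _ _ _ _ (fun N => - (K * c ^+ N)) (fun N => K * c ^+ N)).
- by apply: nearW => N; rewrite -ler_norml.
- by rewrite -oppr0; apply: cvgN.
- exact: geom0.
Qed.

Lemma telescope_pow B N : (1 - B) * \sum_(m < N) B ^+ m.+1 = B - B ^+ N.+1.
Proof.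
elim: N => [|N IH]; first by rewrite big_ord0 mulr0 expr1 subrr.
by rewrite big_ord_recr /= mulrDr IH mulrBl mul1r -exprS addrA subrK.
Qed.

(* Neumann series: for a contraction B, sum_(m >= 1) B^m = (I - B)^-1 B entrywise;
   the partial sums are (I - B)^-1 (B - B^(N+1)) and B^(N+1) decays geometrically. *)
Lemma neumann_series B (i j : 'I_p.+1) : specnorm B < 1 ->
  (fun N => (\sum_(m < N) B ^+ m.+1) i j) @ \oo --> (invmx (1%:M - B) *m B) i j.
Proof.
move=> B_lt1; have Gunit := contraction_unit B_lt1.
set W := invmx (1%:M - B); set c := specnorm B.
have partialE N :
    (\sum_(m < N) B ^+ m.+1) i j = (W *m B) i j - (W *m B ^+ N.+1) i j.
  by rewrite -[\sum_(m < N) _](mulKmx Gunit) mulmxE telescope_pow -mulmxE mulmxBr !mxE.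
rewrite (funext partialE) -[X in _ --> X]subr0; apply: cvgB; first exact: cvg_cst.
apply: (@geometric_dominated_cvg0 _ ((\sum_l `|W i l|) * c) c) => [||N].
- exact: specnorm_ge0.
- exact: B_lt1.
rewrite mxE -mulrA -exprS big_distrl /=; apply: le_trans (ler_norm_sum _ _ _) _.
by apply: ler_sum => l _; rewrite normrM ler_wpM2l ?pow_entry_le.
Qed.

End NeumannSeries.

Section PreconditionedLU.
Variable R : realType.
Variables (n : nat) (M : 'M[R]_n) (alpha : R).
Hypothesis alpha_gt0 : 0 < alpha.
Hypothesis contraction :
  forall j : 'I_n, specnorm (1%:M - alpha *: (lsub M j *m (lsub M j)^T)) < 1.

Let A := Num.sqrt alpha *: M.
Let G (j : 'I_n) : 'M[R]_j.+1 := alpha *: (lsub M j *m (lsub M j)^T).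

Lemma lres_scaled j : lres A j = 1%:M - G j.
Proof.
rewrite /lres /A /G lsubZ linearZ /= -scalemxAl -scalemxAr scalerA.
by rewrite -expr2 sqr_sqrtr ?ltW.
Qed.

Lemma gram_unit j : G j \in unitmx.
Proof. by have := contraction_unit (contraction j); rewrite opprB addrC subrK. Qed.

Lemma leading_unit j : lsub M j \in unitmx.
Proof.
by have := gram_unit j; rewrite unitmxZ ?unitfE ?gt_eqF // unitmx_mul => /andP[].
Qed.

Lemma leading_inv j : invmx (lsub M j) = alpha *: ((lsub M j)^T *m invmx (G j)).
Proof.
rewrite -[RHS](mulKmx (leading_unit j)) -scalemxAr mulmxA scalemxAl.
by rewrite mulmxV ?gram_unit // mulmx1.
Qed.

Definition star_series : 'M[R]_n :=
  ucols (fun j => col ord_max (invmx (G j) *m lres A j)).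

Lemma star_series_cvg (i j : 'I_n) :
  (fun N => \sum_(m < N) Astar A m.+1 i j) @ \oo --> star_series i j.
Proof.
rewrite mxE; case: leqP => [ij|ji]; last first.
  have partial0 N : \sum_(m < N) Astar A m.+1 i j = 0.
    by rewrite big1 // => m _; rewrite Astar_upper.
  by rewrite (funext partial0); apply: cvg_cst.
have partialE N : \sum_(m < N) Astar A m.+1 i j =
    (\sum_(m < N) lres A j ^+ m.+1) (inord i) ord_max.
  by rewrite summxE; apply: eq_bigr => m _; rewrite mxE ij.
have -> : G j = 1%:M - lres A j by rewrite lres_scaled opprB addrC subrK.
rewrite (funext partialE) mxE; apply: neumann_series.
by rewrite lres_scaled; apply: contraction.
Qed.

(* Column by column, I + S = G_j^-1 (I - G_j) + I = G_j^-1. *)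
Lemma one_add_star_series :
  1%:M + star_series = ucols (fun j => col ord_max (invmx (G j))).
Proof.
rewrite -ucols1 ucolsD; apply: eq_ucols => j.
by rewrite !colE -mulmxDl lres_scaled mulmxBr mulmx1 mulVmx ?gram_unit // addrC subrK.
Qed.

Lemma inv_upper_factorE :
  inv_upper_factor M = alpha *: upper (M^T *m (1%:M + star_series)).
Proof.
rewrite one_add_star_series upper_colpart ucolsZ; apply: eq_ucols => j.
rewrite (colpart_mul _ _ (ucols_upper _)) colpart_ucols lsub_tr leading_inv.
by rewrite -col_mul linearZ.
Qed.

End PreconditionedLU.

Theorem mainTheorem6 (R : realType) (n : nat) :
  (forall (A : 'M[R]_n) (k : nat), (1 < k)%N ->
      Astar A k = Astar A k.-1 - upper (A *m upper (A^T *m Astar A k.-1)))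
  /\ (forall A : 'M[R]_n, Astar A 1 = 1%:M - upper (A *m upper A^T))
  /\ (forall (A : 'M[R]_n) (j : 'I_n) (k : nat), (1 < k)%N ->
      colpart (Astar A k) j =
        (1%:M - lsub A j *m (lsub A j)^T) *m colpart (Astar A k.-1) j)
  /\ (forall (M : 'M[R]_n) (alpha : R), 0 < alpha ->
      (forall j : 'I_n,
         specnorm (1%:M - alpha *: (lsub M j *m (lsub M j)^T)) < 1) ->
      let A := Num.sqrt alpha *: M in
      exists (L U : 'M[R]_n),
        [/\ (forall i j : 'I_n, (i < j)%N -> L i j = 0),
            (forall i : 'I_n, L i i = 1),
            (forall i j : 'I_n, (j < i)%N -> U i j = 0),
            M = L *m U &
            U \in unitmx /\
            exists S : 'M[R]_n,
              (forall i j : 'I_n,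
                 (fun N : nat => (\sum_(m < N) Astar A m.+1 i j : R)) @ \oo --> (S i j : R)) /\
              invmx U = alpha *: upper (M^T *m (1%:M + S))]).
Proof.
split; first by move=> A [|[|k]] // _; rewrite AstarS.
split; first by move=> A; rewrite AstarS Astar0 mulmx1.
split; first by move=> A j [|[|k]] // _; rewrite colpart_AstarS.
move=> M alpha alpha_gt0 contraction A.
have Lunit := leading_unit alpha_gt0 contraction.
have Vunit := inv_upper_factor_unit Lunit.
exists (M *m inv_upper_factor M), (invmx (inv_upper_factor M)); split.
- by move=> i j ij; rewrite (lower_factorE Lunit (ltnW ij)) -val_eqE ltn_eqF.
- by move=> i; rewrite (lower_factorE Lunit (leqnn i)) eqxx.
- exact: upper_triangular_inv (ucols_upper _) Vunit.
- by rewrite mulmxK.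
split; first by rewrite unitmx_inv.
exists (star_series M alpha); split; first exact: star_series_cvg.
by rewrite invmxK (inv_upper_factorE alpha_gt0 contraction).
Qed.
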